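(* Let $M$ be a multiplication $L$-module and $\delta_1(A)=(\sqrt{(A:I_M)})I_M$. Then for every proper element $N\in M$, $N\leqslant\delta_1\big((N:I_M)N\big)$, and equality holds if $N$ is prime.
   Context: $L$ is a multiplicative lattice (complete lattice with commutative, associative multiplication distributing over arbitrary joins, identity $1$), compactly generated, $1$ compact, finite products of compact elements compact; $L_\ast$ = compact elements. An $L$-module is a complete lattice $M$ (least $O_M$, greatest $I_M$) with product $aB\in M$ satisfying $(\bigvee a_\alpha)A=\bigvee(a_\alpha A)$, $a(\bigvee A_\alpha)=\bigvee(aA_\alpha)$, $(ab)A=a(bA)$, $1A=A$, $0A=O_M$. $(A:B)=\bigvee\{x\in L:xB\leqslant A\}$; $\sqrt a=\bigvee\{x\in L_\ast:x^n\leqslant a\text{ for some }n\in\mathbb Z_+\}$. $M$ is a multiplication module if every element of $M$ is $aI_M$ for some $a\in L$. Proper means $<I_M$. A proper $N\in M$ is prime if $aX\leqslant N$ ($a\in L$, $X\in M$) implies $X\leqslant N$ or $aI_M\leqslant N$. *)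

From Stdlib Require Import List.

Record mlattice := MLattice {
  mcar :> Type;
  mle : mcar -> mcar -> Prop;
  msup : (mcar -> Prop) -> mcar;
  mmul : mcar -> mcar -> mcar;
  mone : mcar;
  mle_refl : forall x, mle x x;
  mle_trans : forall x y z, mle x y -> mle y z -> mle x z;
  mle_antisym : forall x y, mle x y -> mle y x -> x = y;
  msup_ub : forall (S : mcar -> Prop) x, S x -> mle x (msup S);
  msup_least : forall (S : mcar -> Prop) u, (forall x, S x -> mle x u) -> mle (msup S) u;
  mmulC : forall a b, mmul a b = mmul b a;
  mmulA : forall a b c, mmul a (mmul b c) = mmul (mmul a b) c;
  mmul1 : forall a, mmul mone a = a;
  mmul_sup : forall a (S : mcar -> Prop),
      mmul a (msup S) = msup (fun y => exists x, S x /\ y = mmul a x)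
}.

Arguments mle {_}.
Arguments msup {_}.
Arguments mmul {_}.
Arguments mone {_}.

Definition compact {L : mlattice} (c : L) : Prop :=
  forall S : L -> Prop, mle c (msup S) ->
    exists l : list L, (forall x, In x l -> S x) /\ mle c (msup (fun x => In x l)).

Definition good_mlattice (L : mlattice) : Prop :=
  (forall a : L, a = msup (fun c => compact c /\ mle c a)) /\
  compact (@mone L) /\
  (forall a b : L, compact a -> compact b -> compact (mmul a b)).

Fixpoint mpow {L : mlattice} (x : L) (n : nat) : L :=
  match n with 0 => mone | S k => mmul x (mpow x k) end.

Definition mrad {L : mlattice} (a : L) : L :=
  msup (fun x => compact x /\ exists n, 1 <= n /\ mle (mpow x n) a).

Record lmodule (L : mlattice) := LModule {
  dcar :> Type;
  dle : dcar -> dcar -> Prop;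
  dsup : (dcar -> Prop) -> dcar;
  dact : L -> dcar -> dcar;
  dle_refl : forall x, dle x x;
  dle_trans : forall x y z, dle x y -> dle y z -> dle x z;
  dle_antisym : forall x y, dle x y -> dle y x -> x = y;
  dsup_ub : forall (S : dcar -> Prop) x, S x -> dle x (dsup S);
  dsup_least : forall (S : dcar -> Prop) u, (forall x, S x -> dle x u) -> dle (dsup S) u;
  dact_supl : forall (S : L -> Prop) A,
      dact (msup S) A = dsup (fun Y => exists a, S a /\ Y = dact a A);
  dact_supr : forall a (S : dcar -> Prop),
      dact a (dsup S) = dsup (fun Y => exists X, S X /\ Y = dact a X);
  dact_mul : forall a b A, dact (mmul a b) A = dact a (dact b A);
  dact1 : forall A, dact mone A = A;
  dact0 : forall A, dact (msup (fun _ => False)) A = dsup (fun _ => False)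
}.

Arguments dle {_ _}.
Arguments dsup {_ _}.
Arguments dact {_ _}.

Definition dtop {L} {M : lmodule L} : M := dsup (fun _ => True).

Definition colon {L} {M : lmodule L} (A B : M) : L :=
  msup (fun x => dle (dact x B) A).

Definition multiplication_module {L} (M : lmodule L) : Prop :=
  forall N : M, exists a : L, N = dact a dtop.

Definition proper {L} {M : lmodule L} (N : M) : Prop :=
  dle N dtop /\ N <> dtop.

Definition prime_elt {L} {M : lmodule L} (N : M) : Prop :=
  proper N /\
  forall (a : L) (X : M), dle (dact a X) N -> dle X N \/ dle (dact a dtop) N.

Definition delta1 {L} {M : lmodule L} (A : M) : M :=
  dact (mrad (colon A dtop)) dtop.

From Stdlib Require Import List.

(* Proof of Theorem 3.20.  Write a := (N : I_M).
   - Inequality.  In a multiplication module N = b I_M for some b, and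
     b <= a, so N <= a I_M.  Moreover a * a <= (a N : I_M), because
     (a a) I_M = a (a I_M) <= a N.  In a compactly generated lattice any
     element with a power below c lies below sqrt c, hence
     a <= sqrt (a N : I_M) and N <= a I_M <= delta_1 (a N).
   - Equality for prime N.  For a prime element, x^n I_M <= N forces
     x I_M <= N; since delta_1 (A) is the join of the x I_M over compact x
     with some power x^n I_M <= A, this yields delta_1 (A) <= N for every
     A <= N, and a N <= a I_M <= N. *)

Section LatticeFacts.
Variable L : mlattice.

Lemma msup_pair (a b : L) : mle a b -> b = msup (fun y => y = a \/ y = b).
Proof.
  intro hab. apply mle_antisym.
  - apply msup_ub. now right.
  - apply msup_least. intros x [-> | ->]; [exact hab | apply mle_refl].
Qed.

(* Multiplication is monotone, since it distributes over joins. *)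
Lemma mmul_monor (c a b : L) : mle a b -> mle (mmul c a) (mmul c b).
Proof.
  intro hab. rewrite (msup_pair a b hab), mmul_sup.
  apply msup_ub. exists a. split; [now left | reflexivity].
Qed.

Lemma mmul_mono (a a' b b' : L) :
  mle a a' -> mle b b' -> mle (mmul a b) (mmul a' b').
Proof.
  intros ha hb. apply mle_trans with (mmul a b').
  - now apply mmul_monor.
  - rewrite (mmulC _ a), (mmulC _ a'). now apply mmul_monor.
Qed.

Lemma mpow_mono (a b : L) (n : nat) : mle a b -> mle (mpow a n) (mpow b n).
Proof.
  intro hab. induction n as [|n IH]; simpl.
  - apply mle_refl.
  - now apply mmul_mono.
Qed.

Lemma compact_le_mrad (x c : L) (n : nat) :
  compact x -> 1 <= n -> mle (mpow x n) c -> mle x (mrad c).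
Proof.
  intros hx hn hxn. unfold mrad. apply msup_ub. split; [exact hx|].
  now exists n.
Qed.

(* In a compactly generated lattice, an element with a positive power
   below c lies below sqrt c: test against the compacts beneath it. *)
Lemma le_mrad_of_pow (Hgen : forall a : L, a = msup (fun c => compact c /\ mle c a))
    (a c : L) (n : nat) : 1 <= n -> mle (mpow a n) c -> mle a (mrad c).
Proof.
  intros hn han. rewrite (Hgen a) at 1. apply msup_least.
  intros x [hx hxa]. apply (compact_le_mrad x c n hx hn).
  apply mle_trans with (mpow a n); [now apply mpow_mono | exact han].
Qed.

End LatticeFacts.

Section ModuleFacts.
Variable L : mlattice.
Variable M : lmodule L.

Lemma dsup_pair (A B : M) : dle A B -> B = dsup (fun Y => Y = A \/ Y = B).
Proof.
  intro hAB. apply dle_antisym.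
  - apply dsup_ub. now right.
  - apply dsup_least. intros X [-> | ->]; [exact hAB | apply dle_refl].
Qed.

Lemma dact_monol (a b : L) (A : M) : mle a b -> dle (dact a A) (dact b A).
Proof.
  intro hab. rewrite (msup_pair L a b hab), dact_supl.
  apply dsup_ub. exists a. split; [now left | reflexivity].
Qed.

Lemma dact_monor (a : L) (A B : M) : dle A B -> dle (dact a A) (dact a B).
Proof.
  intro hAB. rewrite (dsup_pair A B hAB), dact_supr.
  apply dsup_ub. exists A. split; [now left | reflexivity].
Qed.

Lemma dle_top (X : M) : dle X dtop.
Proof. apply dsup_ub. exact I. Qed.

Lemma dact_msup_le (S : L -> Prop) (A B : M) :
  (forall a, S a -> dle (dact a A) B) -> dle (dact (msup S) A) B.
Proof.
  intro hS. rewrite dact_supl. apply dsup_least.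
  intros Y [a [ha ->]]. now apply hS.
Qed.

Lemma colon_act_le (A B : M) : dle (dact (colon A B) B) A.
Proof. apply dact_msup_le. now intros x hx. Qed.

Lemma le_colon (x : L) (A B : M) : dle (dact x B) A -> mle x (colon A B).
Proof. intro h. unfold colon. now apply msup_ub. Qed.

Lemma mult_module_le_colon_top (HM : multiplication_module M) (N : M) :
  dle N (dact (colon N dtop) dtop).
Proof.
  destruct (HM N) as [b hb].
  assert (hba : mle b (colon N dtop)) by (apply le_colon; rewrite <- hb; apply dle_refl).
  rewrite hb at 1. now apply dact_monol.
Qed.

Lemma colon_sq_le (N : M) :
  mle (mmul (colon N dtop) (colon N dtop)) (colon (dact (colon N dtop) N) dtop).
Proof.
  apply le_colon. rewrite dact_mul. apply dact_monor, colon_act_le.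
Qed.

Lemma prime_pow_act_le (N : M) (x : L) (n : nat) :
  prime_elt N -> 1 <= n -> dle (dact (mpow x n) dtop) N -> dle (dact x dtop) N.
Proof.
  intros [_ Hp] hn. destruct n as [|n]; [inversion hn|]. clear hn.
  induction n as [|n IH]; intro hxn; simpl in hxn; rewrite dact_mul in hxn.
  - now rewrite dact1 in hxn.
  - destruct (Hp x _ hxn) as [h | h]; [exact (IH h) | exact h].
Qed.

Lemma prime_delta1_le (N A : M) : prime_elt N -> dle A N -> dle (delta1 A) N.
Proof.
  intros Hprime hAN. unfold delta1, mrad. apply dact_msup_le.
  intros x [_ [n [hn hxn]]]. apply (prime_pow_act_le N x n Hprime hn).
  apply dle_trans with (dact (colon A dtop) dtop).
  - now apply dact_monol.
  - apply dle_trans with A; [apply colon_act_le | exact hAN].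
Qed.

End ModuleFacts.

Theorem theorem3p20 (L : mlattice) (HL : good_mlattice L) (M : lmodule L)
  (HM : multiplication_module M) (N : M) (HN : proper N) :
  dle N (delta1 (dact (colon N dtop) N)) /\
  (prime_elt N -> N = delta1 (dact (colon N dtop) N)).
Proof.
  set (a := colon N dtop).
  destruct HL as [Hgen _].
  assert (haN : dle (dact a N) N).
  { apply dle_trans with (dact a dtop);
      [apply dact_monor, dle_top | apply colon_act_le]. }
  assert (Hle : dle N (delta1 (dact a N))).
  { apply dle_trans with (dact a dtop); [apply mult_module_le_colon_top, HM|].
    apply dact_monol, (le_mrad_of_pow L Hgen a _ 2); [auto|].
    simpl. rewrite (mmulC _ a mone), mmul1. apply colon_sq_le. }
  split; [exact Hle|].
  intro Hprime. apply dle_antisym; [exact Hle|].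
  now apply prime_delta1_le.
Qed.
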